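(* Let $m$ be a positive integer, $n=m(m+1)/2$, write $\prod_{i=1}^m(1-X^i)=\sum_{i=0}^nc_iX^i$, and set $d_j=\sum_{i=0}^{n-j}c_i$ for $j=1,\dots,n$. Then for every non-empty $S\subseteq[1,m]$, $$\sum_{j=1}^n d_j\,r(j,S)=\sum_{j=1}^n d_j\,p(j,S)=\begin{cases}1&\text{if }S=[1,m],\\0&\text{otherwise.}\end{cases}$$
   Context: $p(k,S)$ is the number of partitions of $k$ all of whose parts lie in $S$. $r(k,S)$ is the number of partitions of $k$ whose set of distinct parts is exactly $S$. $[1,m]=\{1,\dots,m\}$. *)

From HB Require Import structures.
From mathcomp Require Import all_boot all_order all_algebra.
Set Implicit Arguments. Unset Strict Implicit. Unset Printing Implicit Defensive.
Import Order.TTheory GRing.Theory Num.Theory.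

(* A partition of k is encoded by its multiplicity function:
   f i = number of parts equal to i (1 <= i <= k); f 0 = 0 (parts are
   positive), and \sum_i i * f i = k.  Every multiplicity is <= k, so
   f : {ffun 'I_k.+1 -> 'I_k.+1} covers all partitions of k bijectively. *)
Definition is_partition_mult (k : nat) (f : {ffun 'I_k.+1 -> 'I_k.+1}) : bool :=
  (nat_of_ord (f ord0) == 0%N) && ((\sum_(i < k.+1) i * f i)%N == k).

Definition is_part (k : nat) (f : {ffun 'I_k.+1 -> 'I_k.+1}) (i : 'I_k.+1) : bool :=
  nat_of_ord (f i) != 0%N.

Definition p_count (k : nat) (S : seq nat) : nat :=
  #|[set f : {ffun 'I_k.+1 -> 'I_k.+1} | is_partition_mult f &
      [forall i : 'I_k.+1, is_part f i ==> (nat_of_ord i \in S)]]|.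

Definition r_count (k : nat) (S : seq nat) : nat :=
  #|[set f : {ffun 'I_k.+1 -> 'I_k.+1} | is_partition_mult f &
      [forall i : 'I_k.+1, is_part f i ==> (nat_of_ord i \in S)] &&
      all (fun s => (s < k.+1)%N && is_part f (inord s)) S]|.

Local Open Scope ring_scope.

Definition Pm (m : nat) : {poly int} := \prod_(1 <= i < m.+1) (1 - 'X^i).

Definition cc (m i : nat) : int := (Pm m)`_i.

Definition nn (m : nat) : nat := (m * m.+1) %/ 2.

Definition dd (m j : nat) : int := \sum_(0 <= i < (nn m - j).+1) cc m i.

From HB Require Import structures.
From mathcomp Require Import all_boot all_order all_algebra zify.
Set Implicit Arguments. Unset Strict Implicit. Unset Printing Implicit Defensive.
Import Order.TTheory GRing.Theory Num.Theory.
Local Open Scope ring_scope.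

(* Encode a partition of k by its multiplicity function; then the
   number of partitions of k in which the part size i may occur with the
   multiplicities j allowed by a predicate c is the k-th coefficient of
   prod_i (sum_{j | c i j} X^(i j)).  For p(k,S) the factor of i in S is the
   geometric series 1/(1 - X^i), for r(k,S) it is X^i/(1 - X^i), and every
   other factor is 1.  Truncating all series at degree n = m(m+1)/2 gives a
   single polynomial G (gf below) whose coefficients of degree <= n are the
   counts, and G * prod_{i<=m}(1 - X^i) agrees below degree n+1 with the
   polynomial H = prod_{i in S} X^(i a) * prod_{i notin S} (1 - X^i), a = 0, 1.
   Since d_j is a partial sum of the c_i and d_0 = P_m(1) = 0, the sum
   sum_j d_j [X^j]G is the sum of the coefficients of G * P_m up to degree n,
   i.e. H(1), which is 1 if S = [1,m] and 0 otherwise. *)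

Definition eq_upto (k : nat) (p q : {poly int}) : Prop :=
  forall i, (i <= k)%N -> p`_i = q`_i.

Lemma eq_upto_sym k p q : eq_upto k p q -> eq_upto k q p.
Proof. by move=> epq i ik; rewrite epq. Qed.

Lemma eq_upto_trans k p q r : eq_upto k p q -> eq_upto k q r -> eq_upto k p r.
Proof. by move=> epq eqr i ik; rewrite epq ?eqr. Qed.

(* Truncated equality is a congruence for products: coefficients of degree
   <= k of p * q only involve coefficients of degree <= k of p and q. *)
Lemma eq_uptoM k p p' q q' :
  eq_upto k p p' -> eq_upto k q q' -> eq_upto k (p * q) (p' * q').
Proof.
move=> e_p e_q i ik; rewrite !coefM; apply: eq_bigr => j _.
by rewrite e_p ?e_q // (leq_trans _ ik) ?leq_subr // -ltnS.
Qed.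

Lemma eq_upto_prod k (I : eqType) (r : seq I) (F G : I -> {poly int}) :
  (forall i, i \in r -> eq_upto k (F i) (G i)) ->
  eq_upto k (\prod_(i <- r) F i) (\prod_(i <- r) G i).
Proof.
move=> eFG; rewrite big_seq [X in eq_upto _ _ X]big_seq.
by apply: (big_ind2 (eq_upto k)) => //; apply: eq_uptoM.
Qed.

Lemma eq_upto_subXn k p e : (k < e)%N -> eq_upto k (p - 'X^e) p.
Proof.
move=> ke i ik; rewrite coefB coefXn.
by rewrite (_ : (i == e) = false) ?subr0 //; apply/negbTE; lia.
Qed.

Definition part_factor (c : nat -> nat -> bool) (N i : nat) : {poly int} :=
  \sum_(j < N | c i j) 'X^(i * j).

Lemma prod_if_Xn (I : finType) (b : pred I) (e : I -> nat) :
  \prod_(i : I) (if b i then 'X^(e i) else 0 : {poly int}) =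
  if [forall i, b i] then 'X^(\sum_i e i) else 0.
Proof.
case: forallP => [hb | /forallP/forallPn [i0 /negbTE bi0]].
  by rewrite -prodrXr; apply: eq_bigr => i _; rewrite hb.
by rewrite (bigD1 i0) //= bi0 mul0r.
Qed.

(* Counting lemma: multiplicity functions f on [0,k] with c i (f i) for all i
   and sum_i i * f i = k are counted by the k-th coefficient of the product of
   the generating factors; expand the product into a sum over all f. *)
Lemma card_mult_coef (k : nat) (c : nat -> nat -> bool) :
  (#|[set f : {ffun 'I_k.+1 -> 'I_k.+1} |
      [forall i : 'I_k.+1, c i (f i)] && ((\sum_(i < k.+1) i * f i)%N == k)]|)%:Z =
  (\prod_(i < k.+1) part_factor c k.+1 i)`_k.
Proof.
under eq_bigr do rewrite /part_factor big_mkcond /=.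
rewrite bigA_distr_bigA coef_sum -sum1_card -natz natr_sum big_mkcond /=.
apply: eq_bigr => f _.
rewrite (prod_if_Xn (fun i : 'I_k.+1 => c i (f i)) (fun i : 'I_k.+1 => (i * f i)%N)).
rewrite inE; case: forallP => _ /=; last by rewrite coef0.
by rewrite coefXn eq_sym; case: eqP.
Qed.

(* Admissible multiplicities for partitions with parts in S: a part i of S
   occurs at least a times, any other size does not occur.  a = 0 gives the
   partitions counted by p(k,S), a = 1 those counted by r(k,S). *)
Definition mult_from (S : seq nat) (a i j : nat) : bool :=
  if i \in S then (a <= j)%N else (j == 0)%N.

Lemma parts_in_S_ord0 k (S : seq nat) (f : {ffun 'I_k.+1 -> 'I_k.+1}) :
  0%N \notin S -> [forall i : 'I_k.+1, is_part f i ==> (nat_of_ord i \in S)] ->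
  nat_of_ord (f ord0) == 0%N.
Proof. by move=> S0 /forallP/(_ ord0); rewrite /is_part (negbTE S0) implybF negbK. Qed.

Lemma mult_from0_parts k (S : seq nat) (f : {ffun 'I_k.+1 -> 'I_k.+1}) :
  [forall i : 'I_k.+1, mult_from S 0 i (f i)] =
  [forall i : 'I_k.+1, is_part f i ==> (nat_of_ord i \in S)].
Proof.
apply: eq_forallb => i; rewrite /mult_from /is_part.
by case: (_ \in S); case: (nat_of_ord (f i) == 0%N).
Qed.

Lemma mult_from1_parts k (S : seq nat) (f : {ffun 'I_k.+1 -> 'I_k.+1}) :
  all (fun s => s < k.+1)%N S ->
  [forall i : 'I_k.+1, mult_from S 1 i (f i)] =
  [forall i : 'I_k.+1, is_part f i ==> (nat_of_ord i \in S)] &&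
  all (fun s => (s < k.+1)%N && is_part f (inord s)) S.
Proof.
move=> /allP S_small; rewrite /mult_from /is_part; apply/forallP/andP.
  move=> hf; split.
    by apply/forallP => i; have := hf i; case: (_ \in S); rewrite ?implybT // => /eqP->.
  apply/allP => s sS; rewrite S_small //=; have := hf (inord s).
  by rewrite inordK ?S_small // sS lt0n.
move=> [/forallP hS /allP hall] i; case: ifP => iS.
  have /andP[_] := hall _ iS; rewrite lt0n.
  by rewrite (_ : inord i = i) //; apply: val_inj; rewrite /= inordK.
by have := hS i; rewrite iS implybF negbK.
Qed.

Lemma p_count_coef k (S : seq nat) : 0%N \notin S ->
  (p_count k S)%:Z = (\prod_(i < k.+1) part_factor (mult_from S 0) k.+1 i)`_k.
Proof.
move=> S0; rewrite -card_mult_coef /p_count; congr (_%:Z); apply: eq_card => f.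
rewrite !inE /is_partition_mult mult_from0_parts andbC; case: forallP => //= /forallP hS.
by rewrite (parts_in_S_ord0 S0 hS).
Qed.

Lemma r_count_coef k (S : seq nat) : 0%N \notin S -> all (fun s => s < k.+1)%N S ->
  (r_count k S)%:Z = (\prod_(i < k.+1) part_factor (mult_from S 1) k.+1 i)`_k.
Proof.
move=> S0 S_small; rewrite -card_mult_coef /r_count; congr (_%:Z); apply: eq_card => f.
rewrite !inE /is_partition_mult mult_from1_parts // andbC.
case: forallP => //= /forallP hS; rewrite (parts_in_S_ord0 S0 hS) /=.
by rewrite andbC.
Qed.

(* A partition of k cannot have a part s > k. *)
Lemma r_count_large k (S : seq nat) s : s \in S -> (k < s)%N -> r_count k S = 0%N.
Proof.
move=> sS ks; apply/eqP; rewrite cards_eq0; apply/eqP/setP => f; rewrite !inE.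
apply/negbTE; rewrite !negb_and; apply/orP; right; apply/orP; right.
by apply/allPn; exists s; rewrite // ltnNge ks.
Qed.

Lemma coef_part_factor c N i t : (0 < i)%N -> (t < N)%N ->
  (part_factor c N i)`_t = \sum_(j < t.+1 | c i j) (t == i * j)%:R.
Proof.
move=> i_gt0 tN; rewrite coef_sum (big_ord_widen_cond _ (c i) (fun j => (t == i * j)%:R) tN).
rewrite [RHS]big_mkcondr; apply: eq_bigr => j _; rewrite coefXn.
by case: ltnP => // tj; rewrite (_ : (t == i * j) = false) //; apply/negbTE; nia.
Qed.

Lemma part_factor_trivial c N i : (0 < N)%N -> (forall j, c i j = (j == 0)%N) ->
  part_factor c N i = 1.
Proof.
by case: N => // N _ ci; rewrite /part_factor (big_pred1 ord0) ?muln0.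
Qed.

Lemma part_factor_len c N N' i k : (0 < i)%N -> (k < N)%N -> (k < N')%N ->
  eq_upto k (part_factor c N i) (part_factor c N' i).
Proof. by move=> i_gt0 kN kN' t tk; rewrite !coef_part_factor // (leq_ltn_trans tk). Qed.

Lemma part_factor_high c N i k : (k < i)%N -> (k < N)%N ->
  eq_upto k (part_factor c N i) (if c i 0%N then 1 else 0).
Proof.
move=> ki kN t tk; rewrite coef_part_factor ?(leq_ltn_trans tk) //; last lia.
rewrite big_mkcond big_ord_recl big1 ?Monoid.mulm1 => [|j _]; last first.
  by rewrite lift0; case: (c i _) => //; rewrite (_ : (t == _) = false) //; apply/negbTE; nia.
by case: (c i 0%N); rewrite ?coef1 ?coef0 //= [i * _]muln0.
Qed.

Lemma part_prod_extend c k K : (k <= K)%N -> (forall j, c 0%N j = (j == 0)%N) ->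
  (forall i, (k < i <= K)%N -> c i 0%N) ->
  eq_upto k (\prod_(i < k.+1) part_factor c k.+1 i)
            (\prod_(i < K.+1) part_factor c K.+1 i).
Proof.
move=> kK c0 c_high; rewrite -!(big_mkord xpredT).
rewrite [X in eq_upto _ _ X](big_cat_nat (n := k.+1)) //=.
rewrite -[X in eq_upto _ X _]mulr1; apply: eq_uptoM.
  apply: eq_upto_prod => i; rewrite mem_index_iota => /andP[_ ik].
  case: (posnP i) => [-> | i_gt0]; last exact: part_factor_len.
  by rewrite !part_factor_trivial.
apply: (@eq_upto_trans _ _ (\prod_(k.+1 <= i < K.+1) 1)); first by rewrite big1_eq.
apply: eq_upto_prod => i; rewrite mem_index_iota => /andP[ki iK].
have := part_factor_high c (ki : (k < i)%N) (leq_ltn_trans kK (ltnSn K)).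
by rewrite c_high ?ki //; apply: eq_upto_sym.
Qed.

Lemma part_prod_support c N K m : (0 < N)%N -> (m <= K)%N ->
  (forall i j, (i == 0)%N || (m < i)%N -> c i j = (j == 0)%N) ->
  \prod_(i < K.+1) part_factor c N i = \prod_(1 <= i < m.+1) part_factor c N i.
Proof.
move=> N_gt0 mK c_out; rewrite -(big_mkord xpredT) big_ltn //.
rewrite part_factor_trivial // ?mul1r => [|j]; last exact: c_out.
rewrite (big_cat_nat (n := m.+1)) //= [X in _ * X]big1_seq ?mulr1 // => i.
rewrite mem_index_iota => /andP[_ /andP[mi _]].
by apply: part_factor_trivial => // j; rewrite c_out // mi orbT.
Qed.

Lemma geom_telescope i a b : (a <= b)%N ->
  (1 - 'X^i) * \sum_(a <= j < b) 'X^(i * j) = 'X^(i * a) - 'X^(i * b) :> {poly int}.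
Proof.
move=> ab; rewrite mulr_sumr (telescope_sumr_eq (fun j => - 'X^(i * j)) _ ab).
  by rewrite opprK addrC.
by move=> j _; rewrite mulrBl mul1r -exprD -mulnS opprK addrC.
Qed.

Lemma part_factor_in S a N i : i \in S ->
  part_factor (mult_from S a) N i = \sum_(a <= j < N) 'X^(i * j).
Proof. by move=> iS; rewrite big_geq_mkord; apply: eq_bigl => j; rewrite /mult_from iS. Qed.

Lemma part_factor_out S a N i : (0 < N)%N -> i \notin S ->
  part_factor (mult_from S a) N i = 1.
Proof. by move=> N_gt0 /negbTE iS; apply: part_factor_trivial => // j; rewrite /mult_from iS. Qed.

Lemma prod_indicator (P : pred nat) (r : seq nat) :
  \prod_(i <- r) (if P i then 1 else 0 : int) = (all P r)%:R.
Proof.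
elim: r => [|i r IH]; first by rewrite big_nil.
by rewrite big_cons IH /=; case: (P i); rewrite ?mul1r ?mul0r.
Qed.

Lemma size_prod_le (r : seq nat) (F : nat -> {poly int}) :
  (forall i, size (F i) <= i.+1)%N ->
  (size (\prod_(i <- r) F i)%R <= (\sum_(i <- r) i).+1)%N.
Proof.
move=> sF; elim: r => [|i r IH]; first by rewrite !big_nil size_poly1.
rewrite !big_cons (leq_trans (size_polyMleq _ _)) //.
by have := sF i; move: IH; lia.
Qed.

Lemma size_1subXn i : (size (1 - 'X^i : {poly int})%R <= i.+1)%N.
Proof.
rewrite (leq_trans (size_polyD _ _)) // size_polyN size_polyXn size_poly1.
by rewrite geq_max ltnS leqnn andbT.
Qed.

Lemma sum_triangle_swap (a b : nat -> int) n :
  \sum_(j < n.+1) a j * \sum_(i < (n - j).+1) b i =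
  \sum_(N < n.+1) \sum_(j < N.+1) a j * b (N - j)%N.
Proof.
elim: n => [|n IH]; first by rewrite !big_ord1 /= subnn.
rewrite [RHS]big_ord_recr /= -IH [LHS]big_ord_recr /= subnn.
rewrite [X in _ = _ + X]big_ord_recr /= subnn addrA; congr (_ + _).
  rewrite -big_split /=; apply: eq_bigr => j _.
  by rewrite subSn ?big_ord_recr /= ?mulrDr // -ltnS.
by rewrite big_ord1.
Qed.

Lemma sum_coef_horner1 (p : {poly int}) N : (size p <= N)%N -> \sum_(i < N) p`_i = p.[1].
Proof.
by move=> sp; rewrite (horner_coef_wide 1 sp); apply: eq_bigr => i _; rewrite expr1n mulr1.
Qed.

(* n = m(m+1)/2 is the sum 1 + ... + m, hence the degree of P_m. *)
Lemma tri_sum m : (\sum_(1 <= i < m.+1) i)%N = nn m.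
Proof.
have := bin2_sum m.+1; rewrite (big_ltn (ltn0Sn m)) add0n => ->.
by rewrite /nn bin2 /= divn2 mulnC.
Qed.

Lemma leq_nn m : (m <= nn m)%N.
Proof. by rewrite -tri_sum; case: m => // m; rewrite big_nat_recr //= leq_addl. Qed.

Lemma size_Pm m : (size (Pm m) <= (nn m).+1)%N.
Proof. by rewrite -tri_sum; apply: size_prod_le => i; apply: size_1subXn. Qed.

(* d_0 = c_0 + ... + c_n = P_m(1) = 0, because of the factor 1 - X. *)
Lemma Pm_root1 m : (0 < m)%N -> (Pm m).[1] = 0.
Proof. by move=> m_gt0; rewrite /Pm big_ltn // hornerM !hornerE. Qed.

Lemma dd0 m : (0 < m)%N -> dd m 0 = 0.
Proof.
by move=> m_gt0; rewrite /dd subn0 big_mkord sum_coef_horner1 ?size_Pm ?Pm_root1.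
Qed.

Lemma sum_dd_eval m (G H : {poly int}) : (0 < m)%N ->
  eq_upto (nn m) (G * Pm m) H -> (size H <= (nn m).+1)%N ->
  \sum_(1 <= j < (nn m).+1) dd m j * G`_j = H.[1].
Proof.
move=> m_gt0 eGH sH; rewrite -(sum_coef_horner1 sH).
transitivity (\sum_(0 <= j < (nn m).+1) G`_j * \sum_(i < (nn m - j).+1) (Pm m)`_i).
  have dd_sum j : dd m j = \sum_(i < (nn m - j).+1) (Pm m)`_i by rewrite /dd big_mkord.
  rewrite [RHS]big_ltn // -dd_sum dd0 // mulr0 add0r.
  by apply: eq_bigr => j _; rewrite mulrC dd_sum.
by rewrite big_mkord sum_triangle_swap; apply: eq_bigr => N _; rewrite -coefM eGH // -ltnS.
Qed.

Section TruncatedGeneratingFunction.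

Variables (m : nat) (S : seq nat).
Hypothesis S_range : forall s, s \in S -> (1 <= s <= m)%N.

Lemma notin_S i : (i == 0)%N || (m < i)%N -> i \notin S.
Proof. by apply: contraL => /S_range; case: i => //= i; rewrite -leqNgt. Qed.

(* The generating function of mult_from S a, truncated at degree n: its
   coefficients of degree <= n count the partitions (gf 0: p, gf 1: r). *)
Definition gf (a : nat) : {poly int} :=
  \prod_(1 <= i < m.+1) part_factor (mult_from S a) (nn m).+1 i.

(* The k-th coefficient of the degree-k product of the counting lemma is that
   of gf, as long as the extra part sizes admit multiplicity 0. *)
Lemma gf_coef a k : (k <= nn m)%N -> (a == 0)%N || all (fun s => s <= k)%N S ->
  (\prod_(i < k.+1) part_factor (mult_from S a) k.+1 i)`_k = (gf a)`_k.
Proof.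
move=> k_le a_small; have out i j : (i == 0)%N || (m < i)%N -> mult_from S a i j = (j == 0)%N.
  by move=> /notin_S /negbTE iS; rewrite /mult_from iS.
rewrite /gf -(@part_prod_support _ _ (nn m) m) ?leq_nn //.
apply: part_prod_extend => // [j | i /andP[ki _]]; first exact: out.
rewrite /mult_from; case: ifP => // iS; rewrite leqn0.
by case/orP: a_small => // /allP/(_ _ iS); rewrite leqNgt ki.
Qed.

(* If some part size of S exceeds k, no r-partition of k exists and the
   coefficient of gf 1 vanishes as well. *)
Lemma gf_high s k : s \in S -> (k < s)%N -> (gf 1)`_k = 0.
Proof.
move=> sS ks; have /andP[s_gt0 s_le] := S_range sS.
rewrite /gf (bigD1_seq s) ?iota_uniq ?mem_index_iota ?s_gt0 ?ltnS //=.
have kN : (k < (nn m).+1)%N by have := leq_nn m; lia.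
have vanish := part_factor_high (mult_from S 1) ks kN.
rewrite coefM big1 // => j _; rewrite vanish; last by rewrite -ltnS.
by rewrite /mult_from sS coef0 mul0r.
Qed.

Lemma p_count_gf k : (k <= nn m)%N -> (p_count k S)%:Z = (gf 0)`_k.
Proof. by move=> k_le; rewrite p_count_coef ?notin_S // gf_coef. Qed.

Lemma r_count_gf k : (k <= nn m)%N -> (r_count k S)%:Z = (gf 1)`_k.
Proof.
move=> k_le; have [S_small | /allPn[s sS]] := boolP (all (fun s => s <= k)%N S).
  by rewrite r_count_coef ?notin_S ?gf_coef ?S_small ?orbT.
by rewrite -ltnNge => ks; rewrite (r_count_large sS ks) (gf_high sS ks).
Qed.

Lemma gf_mul_Pm a : (a <= 1)%N ->
  eq_upto (nn m) (gf a * Pm m)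
    (\prod_(1 <= i < m.+1) (if i \in S then 'X^(i * a) else 1 - 'X^i)).
Proof.
move=> a_le1; rewrite /gf /Pm -big_split /=; apply: eq_upto_prod => i.
rewrite mem_index_iota => /andP[i_gt0 _]; case: ifP => iS; last first.
  by rewrite part_factor_out ?iS // mul1r.
rewrite part_factor_in // mulrC geom_telescope; last by apply: leq_trans a_le1 _.
by apply: eq_upto_subXn; nia.
Qed.

Lemma sum_dd_gf a : (0 < m)%N -> (a <= 1)%N ->
  \sum_(1 <= j < (nn m).+1) dd m j * (gf a)`_j = (all (fun i => i \in S) (iota 1 m))%:R.
Proof.
move=> m_gt0 a_le1; rewrite (sum_dd_eval m_gt0 (gf_mul_Pm a_le1)); last first.
  rewrite -tri_sum; apply: size_prod_le => i; case: (i \in S); last exact: size_1subXn.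
  by rewrite size_polyXn ltnS; nia.
rewrite horner_prod -prod_indicator /index_iota subSS subn0.
by apply: eq_bigr => i _; case: (i \in S); rewrite !hornerE ?expr1n ?subrr.
Qed.

Lemma S_fullP : reflect (S =i iota 1 m) (all (fun i => i \in S) (iota 1 m)).
Proof.
apply: (iffP allP) => [S_full x | eqS x]; last by rewrite eqS.
by apply/idP/idP => [/S_range | /S_full //]; rewrite mem_iota add1n ltnS.
Qed.

End TruncatedGeneratingFunction.

Unset Implicit Arguments.
Set Strict Implicit.

Theorem propositionA (m : nat) (S : seq nat) :
  (0 < m)%N ->
  S != [::] ->
  all (fun s => (1 <= s <= m)%N) S ->
  let n := nn m in
  (\sum_(1 <= j < n.+1) dd m j * (r_count j S)%:Z =
   \sum_(1 <= j < n.+1) dd m j * (p_count j S)%:Z)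
  /\ (S =i iota 1 m -> \sum_(1 <= j < n.+1) dd m j * (p_count j S)%:Z = 1)
  /\ (~ (S =i iota 1 m) -> \sum_(1 <= j < n.+1) dd m j * (p_count j S)%:Z = 0).
Proof.
move=> m_gt0 _ /allP S_range n.
have sum_r : \sum_(1 <= j < n.+1) dd m j * (r_count j S)%:Z =
             (all (fun i => i \in S) (iota 1 m))%:R.
  rewrite -(sum_dd_gf S m_gt0 (leqnn 1)); apply: eq_big_nat => j /andP[_ j_le].
  by rewrite (r_count_gf S_range).
have sum_p : \sum_(1 <= j < n.+1) dd m j * (p_count j S)%:Z =
             (all (fun i => i \in S) (iota 1 m))%:R.
  rewrite -(sum_dd_gf S m_gt0 (leq0n 1)); apply: eq_big_nat => j /andP[_ j_le].
  by rewrite (p_count_gf S_range).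
rewrite sum_r sum_p; split=> //.
have [S_full | S_not_full] := S_fullP S_range; first by split=> // /(_ S_full).
by split=> // /S_not_full.
Qed.
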